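(* Let $a>0$ be a constant, $\sigma\in\{1,-1\}$, $J=\mathrm{diag}(1,\sigma)$, and let $\rho_n=\rho_n(s)$ (real-valued) and $q_n=q_n(s)$ (complex-valued), $n\in\mathbb{Z}$, be potentials. For a spectral parameter $\lambda$ consider the linear system $$\Psi_{n+1}=U_n(\rho_n,q_n;\lambda)\Psi_n,\qquad \Psi_{n,s}=V_n(q_n;\lambda)\Psi_n,$$ where $$U_n(\rho_n,q_n;\lambda)=\begin{bmatrix}1-\frac{\mathrm{i}a\rho_n}{\lambda} & -\sigma\frac{q_{n+1}^*-q_n^*}{\lambda}\\[4pt] \frac{q_{n+1}-q_n}{\lambda} & 1+\frac{\mathrm{i}a\rho_n}{\lambda}\end{bmatrix},\qquad V_n(q_n;\lambda)=\frac{\mathrm{i}}{4}\lambda\sigma_3+\frac{\mathrm{i}}{2}\begin{bmatrix}0&\sigma q_n^*\\ q_n&0\end{bmatrix},\qquad \sigma_3=\mathrm{diag}(1,-1).$$ Let $\lambda_1\in\mathbb{C}\setminus\mathbb{R}$ and let $|y_{1,n}\rangle=(\psi_{1,n},\phi_{1,n})^T$ be a solution of this system at $\lambda=\lambda_1$, with $\langle y_{1,n}|J|y_{1,n}\rangle\neq 0$, where $\langle y_{1,n}|=|y_{1,n}\rangle^{\dagger}$ (conjugate transpose). Define the Darboux matrix $$T_n=I+\frac{\lambda_1^*-\lambda_1}{\lambda-\lambda_1^*}P_n,\qquad P_n=\frac{|y_{1,n}\rangle\langle y_{1,n}|J}{\langle y_{1,n}|J|y_{1,n}\rangle}.$$ Then,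 for any solution $\Psi_n$ of the system above, $\Psi_n^{[1]}=T_n\Psi_n$ satisfies $$\Psi_{n+1}^{[1]}=U_n(\rho_n^{[1]},q_n^{[1]};\lambda)\Psi_n^{[1]},\qquad \Psi_{n,s}^{[1]}=V_n(q_n^{[1]};\lambda)\Psi_n^{[1]},$$ where the new potentials are given by the Bäcklund transformation $$\rho_n^{[1]}=\rho_n-\frac{2}{a}\,\partial_s\ln\!\left(\frac{E\big(\langle y_{1,n}|J|y_{1,n}\rangle\big)}{\langle y_{1,n}|J|y_{1,n}\rangle}\right),\qquad q_n^{[1]}=q_n+\frac{(\lambda_1^*-\lambda_1)\psi_{1,n}^*\phi_{1,n}}{\langle y_{1,n}|J|y_{1,n}\rangle},$$ and moreover $$|q_n^{[1]}|^2=|q_n|^2+4\sigma\,\partial_s^2\ln\!\left(\frac{\langle y_{1,n}|J|y_{1,n}\rangle}{\lambda_1^*-\lambda_1}\right).$$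
   Context: $^*$ denotes complex conjugation and $\dagger$ the conjugate transpose. $E$ denotes the shift operator $n\mapsto n+1$, i.e. $E(f_n)=f_{n+1}$. The notation $U_n(\rho_n^{[1]},q_n^{[1]};\lambda)$ means the matrix $U_n$ with $\rho_n,q_n,q_{n+1}$ replaced by $\rho_n^{[1]},q_n^{[1]},q_{n+1}^{[1]}$. This linear system is the Lax pair of the semi-discrete complex coupled dispersionless system (related to the semi-discrete complex short pulse equation via $a\rho_n=x_{n+1}-x_n$). *)

From Stdlib Require Import Reals ZArith.
From Coquelicot Require Import Coquelicot.
Open Scope C_scope.

Record vec2 := V2 { v1 : C ; v2 : C }.
Record mat2 := M2 { m11 : C ; m12 : C ; m21 : C ; m22 : C }.

Definition mulMV (M : mat2) (x : vec2) : vec2 :=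
  V2 (m11 M * v1 x + m12 M * v2 x) (m21 M * v1 x + m22 M * v2 x).

Definition Umat (a sigma : R) (rho : Z -> R -> R) (q : Z -> R -> C)
    (n : Z) (s : R) (lam : C) : mat2 :=
  M2 (1 - Ci * RtoC a * RtoC (rho n s) / lam)
     (- RtoC sigma * (Cconj (q (n + 1)%Z s) - Cconj (q n s)) / lam)
     ((q (n + 1)%Z s - q n s) / lam)
     (1 + Ci * RtoC a * RtoC (rho n s) / lam).

Definition Vmat (sigma : R) (q : Z -> R -> C) (n : Z) (s : R) (lam : C) : mat2 :=
  M2 (Ci / 4 * lam)
     (Ci / 2 * (RtoC sigma * Cconj (q n s)))
     (Ci / 2 * q n s)
     (- (Ci / 4 * lam)).

Definition lax_solution (a sigma : R) (rho : Z -> R -> R) (q : Z -> R -> C)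
    (lam : C) (Psi : Z -> R -> vec2) : Prop :=
  (forall (n : Z) (s : R), Psi (n + 1)%Z s = mulMV (Umat a sigma rho q n s lam) (Psi n s))
  /\ (forall (n : Z) (s : R),
        is_derive (fun t => v1 (Psi n t)) s (v1 (mulMV (Vmat sigma q n s lam) (Psi n s)))
     /\ is_derive (fun t => v2 (Psi n t)) s (v2 (mulMV (Vmat sigma q n s lam) (Psi n s)))).

(* <y|J|y> with J = diag(1, sigma); this is real: |psi|^2 + sigma |phi|^2 *)
Definition brJ (sigma : R) (y : vec2) : R :=
  Rplus (pow (Cmod (v1 y)) 2) (Rmult sigma (pow (Cmod (v2 y)) 2)).

Definition Pmat (sigma : R) (y : vec2) : mat2 :=
  let b := RtoC (brJ sigma y) in
  M2 (v1 y * Cconj (v1 y) / b)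
     (v1 y * (RtoC sigma * Cconj (v2 y)) / b)
     (v2 y * Cconj (v1 y) / b)
     (v2 y * (RtoC sigma * Cconj (v2 y)) / b).

Definition Tmat (sigma : R) (l1 : C) (y : vec2) (lam : C) : mat2 :=
  let c := (Cconj l1 - l1) / (lam - Cconj l1) in
  let P := Pmat sigma y in
  M2 (1 + c * m11 P) (c * m12 P) (c * m21 P) (1 + c * m22 P).

Definition rho1 (a sigma : R) (rho : Z -> R -> R) (y : Z -> R -> vec2)
    (n : Z) (s : R) : R :=
  (rho n s - 2 / a *
     Derive (fun t => ln (Rabs (brJ sigma (y (n + 1)%Z t) / brJ sigma (y n t)))) s)%R.

Definition q1 (sigma : R) (l1 : C) (q : Z -> R -> C) (y : Z -> R -> vec2)
    (n : Z) (s : R) : C :=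
  q n s + (Cconj l1 - l1) * Cconj (v1 (y n s)) * v2 (y n s) / RtoC (brJ sigma (y n s)).

From Stdlib Require Import Reals ZArith Lra Lia.
From Coquelicot Require Import Coquelicot.
Open Scope C_scope.

(* Since y solves the Lax pair at l1, y_{n+1} = U_n(l1) y_n and y_{n,s} = V_n(l1) y_n.
   Substituting these, the gauge conditions T_{n+1} U_n = U_n^[1] T_n and
   T_{n,s} + T_n V_n = V_n^[1] T_n become rational identities in lam, l1, the
   potentials and the components of y_n and their conjugates, which hold for
   sigma^2 = 1 once rho^[1] and q^[1] are given by the Baecklund formulas.  The only
   analytic input is  d/ds <y|J|y> = -(Im l1 / 2) <y|sigma_3 J|y>,  which turns the
   logarithmic derivatives in rho^[1] and in the formula for |q^[1]|^2 into rational
   expressions as well. *)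

Lemma C_ext (z w : C) : Re z = Re w -> Im z = Im w -> z = w.
Proof. destruct z, w; simpl; intros -> ->; reflexivity. Qed.

Ltac as_eq T := match goal with |- @eq _ ?a ?b => change (@eq T a b) end.

Lemma is_derive_eq {V : NormedModule R_AbsRing} (f : R -> V) x d1 d2 :
  is_derive f x d1 -> d1 = d2 -> is_derive f x d2.
Proof. now intros H <-. Qed.

Lemma is_derive_Re (f : R -> C) x df :
  is_derive f x df -> is_derive (fun t => Re (f t)) x (Re df).
Proof.
  intro H. eapply filterdiff_ext_lin.
  - exact (filterdiff_comp f fst _ _ H (filterdiff_linear _ is_linear_fst)).
  - reflexivity.
Qed.

Lemma is_derive_Im (f : R -> C) x df :
  is_derive f x df -> is_derive (fun t => Im (f t)) x (Im df).
Proof.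
  intro H. eapply filterdiff_ext_lin.
  - exact (filterdiff_comp f snd _ _ H (filterdiff_linear _ is_linear_snd)).
  - reflexivity.
Qed.

Lemma is_derive_C_Re_Im (f : R -> C) x dre dim :
  is_derive (fun t => Re (f t)) x dre -> is_derive (fun t => Im (f t)) x dim ->
  is_derive f x (dre, dim).
Proof.
  intros Hre Him.
  apply (filterdiff_ext (fun t => (Re (f t), Im (f t)))).
  { intro t. now destruct (f t). }
  eapply filterdiff_ext_lin.
  - apply (filterdiff_comp_2 _ _ pair _ _ pair Hre Him).
    apply filterdiff_linear, is_linear_prod; [apply is_linear_fst | apply is_linear_snd].
  - reflexivity.
Qed.

Lemma is_derive_Cconst (c : C) x : is_derive (fun _ : R => c) x (RtoC 0).
Proof. exact (is_derive_const (K := R_AbsRing) c x). Qed.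

Lemma is_derive_Cplus (f g : R -> C) x df dg :
  is_derive f x df -> is_derive g x dg -> is_derive (fun t => f t + g t) x (df + dg).
Proof. exact (is_derive_plus f g x df dg). Qed.

Lemma is_derive_Cminus (f g : R -> C) x df dg :
  is_derive f x df -> is_derive g x dg -> is_derive (fun t => f t - g t) x (df - dg).
Proof. exact (is_derive_minus f g x df dg). Qed.

Lemma is_derive_Copp (f : R -> C) x df :
  is_derive f x df -> is_derive (fun t => - f t) x (- df).
Proof. exact (is_derive_opp f x df). Qed.

Lemma is_derive_Cmult (f g : R -> C) x df dg :
  is_derive f x df -> is_derive g x dg ->
  is_derive (fun t => f t * g t) x (df * g x + f x * dg).
Proof.
  intros Hf Hg.
  pose proof (is_derive_Re f x df Hf) as Hf1. pose proof (is_derive_Im f x df Hf) as Hf2.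
  pose proof (is_derive_Re g x dg Hg) as Hg1. pose proof (is_derive_Im g x dg Hg) as Hg2.
  eapply is_derive_eq.
  - apply is_derive_C_Re_Im.
    + exact (is_derive_minus _ _ x _ _ (is_derive_mult _ _ x _ _ Hf1 Hg1 Rmult_comm)
                                       (is_derive_mult _ _ x _ _ Hf2 Hg2 Rmult_comm)).
    + exact (is_derive_plus _ _ x _ _ (is_derive_mult _ _ x _ _ Hf1 Hg2 Rmult_comm)
                                      (is_derive_mult _ _ x _ _ Hf2 Hg1 Rmult_comm)).
  - apply C_ext; unfold Re, Im; simpl; unfold minus, plus, opp, mult; simpl; ring.
Qed.

Lemma is_derive_Cconj (f : R -> C) x df :
  is_derive f x df -> is_derive (fun t => Cconj (f t)) x (Cconj df).
Proof.
  intro Hf. apply is_derive_C_Re_Im.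
  - exact (is_derive_Re f x df Hf).
  - exact (is_derive_opp _ x _ (is_derive_Im f x df Hf)).
Qed.

Lemma is_derive_RtoC (g : R -> R) x dg :
  is_derive g x dg -> is_derive (fun t => RtoC (g t)) x (RtoC dg).
Proof.
  intro Hg. apply is_derive_C_Re_Im; [exact Hg |].
  exact (is_derive_const (V := R_NormedModule) 0%R x).
Qed.

(* Unconditional, because both [Rinv 0] and [Cinv 0] are [0]. *)
Lemma RtoC_Rinv (r : R) : RtoC (/ r) = / RtoC r.
Proof.
  destruct (Req_dec r 0) as [-> | Hr].
  - apply C_ext; unfold Cinv, RtoC, Re, Im; simpl; rewrite ?Rinv_0; unfold Rdiv; ring.
  - exact (RtoC_inv r Hr).
Qed.

Lemma is_derive_Cdiv_RtoC (f : R -> C) (g : R -> R) x df dg :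
  is_derive f x df -> is_derive g x dg -> g x <> 0%R ->
  is_derive (fun t => f t / RtoC (g t)) x
    ((df * RtoC (g x) - f x * RtoC dg) / (RtoC (g x) * RtoC (g x))).
Proof.
  intros Hf Hg Hx.
  assert (HxC : RtoC (g x) <> 0) by (intro E; apply Hx; now injection E).
  eapply is_derive_eq.
  - apply (is_derive_Cmult f (fun t => / RtoC (g t))); [exact Hf |].
    apply (is_derive_ext (fun t => RtoC (/ g t))); [intro t; apply RtoC_Rinv |].
    exact (is_derive_RtoC _ x _ (is_derive_inv g x dg Hg Hx)).
  - rewrite RtoC_div, RtoC_opp, RtoC_pow by (apply pow_nonzero; exact Hx).
    simpl. as_eq C. field. exact HxC.
Qed.

(* Also true at [r = 0], where both sides are Stdlib's junk value [ln 0 = 0]. *)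
Lemma ln_Rabs_pow2 (r : R) : ln (Rabs r) = (ln (r ^ 2) / 2)%R.
Proof.
  destruct (Req_dec r 0) as [-> | Hr].
  - rewrite Rabs_R0, pow_i by lia. unfold ln. destruct (Rlt_dec 0 0); [exfalso; lra | field].
  - rewrite <- pow2_abs, ln_pow by (apply Rabs_pos_lt, Hr). cbn [INR]. field.
Qed.

Lemma is_derive_ln_Rabs (g : R -> R) x dg :
  is_derive g x dg -> g x <> 0%R -> is_derive (fun t => ln (Rabs (g t))) x (dg / g x)%R.
Proof.
  intros Hg Hx.
  apply (is_derive_ext (fun t => ln (g t ^ 2) / 2)%R); [intro t; symmetry; apply ln_Rabs_pow2 |].
  eapply is_derive_eq.
  - apply (is_derive_div (fun t => ln (g t ^ 2)%R) (fun _ => 2%R)).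
    + apply (is_derive_comp ln (fun t => g t ^ 2)%R); [| exact (is_derive_pow g 2 x dg Hg)].
      apply is_derive_ln, pow2_gt_0, Hx.
    + apply (is_derive_const (V := R_NormedModule)).
    + lra.
  - unfold scal, zero; simpl; unfold mult; simpl. field. exact Hx.
Qed.

Lemma is_derive_ln_Cmod_RtoC_div (g : R -> R) (c : C) x dg :
  is_derive g x dg -> g x <> 0%R -> c <> 0 ->
  is_derive (fun t => ln (Cmod (RtoC (g t) / c))) x (dg / g x)%R.
Proof.
  intros Hg Hx Hc.
  assert (Hmc : Cmod c <> 0%R) by (intro E; apply Hc, Cmod_eq_0, E).
  apply (is_derive_ext (fun t => ln (Rabs (g t / Cmod c)))).
  { intro t. now rewrite Cmod_div, Cmod_R, Rabs_div, (Rabs_pos_eq (Cmod c))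
      by (apply Cmod_ge_0 || exact Hmc || exact Hc). }
  eapply is_derive_eq.
  - apply (is_derive_ln_Rabs (fun t => g t / Cmod c)%R).
    + apply (is_derive_div g (fun _ => Cmod c)); [exact Hg | | exact Hmc].
      apply (is_derive_const (V := R_NormedModule)).
    + unfold Rdiv. apply Rmult_integral_contrapositive_currified; [exact Hx |].
      apply Rinv_neq_0_compat, Hmc.
  - unfold zero; simpl. as_eq R. field. split; assumption.
Qed.

Ltac derive_C_leaf :=
  match goal with H : forall (_ : Z) (_ : R), is_derive _ _ _ |- _ => exact (H _ _) end.

Ltac derive_C :=
  try (first
    [ match goal with
      | |- is_derive (fun _ => ?c) _ _ => apply (is_derive_Cconst c)
      | |- is_derive (fun t => @?f t / RtoC (@?g t)) _ _ => apply (is_derive_Cdiv_RtoC f g)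
      | |- is_derive (fun t => @?f t - @?g t) _ _ => apply (is_derive_Cminus f g)
      | |- is_derive (fun t => @?f t + @?g t) _ _ => apply (is_derive_Cplus f g)
      | |- is_derive (fun t => - @?f t) _ _ => apply (is_derive_Copp f)
      | |- is_derive (fun t => @?f t * @?g t) _ _ => apply (is_derive_Cmult f g)
      | |- is_derive (fun t => Cconj (@?f t)) _ _ => apply (is_derive_Cconj f)
      | |- is_derive (fun t => RtoC (@?f t)) _ _ => apply (is_derive_RtoC f)
      end
    | derive_C_leaf ];
    derive_C).

Lemma Cconj_Ci : Cconj Ci = - Ci.
Proof. apply C_ext; simpl; ring. Qed.

Lemma Cconj_RtoC (r : R) : Cconj (RtoC r) = RtoC r.
Proof. apply C_ext; simpl; ring. Qed.

Lemma Cconj_Cdiv (z w : C) : Cconj (z / w) = Cconj z / Cconj w.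
Proof.
  destruct z as [x1 x2], w as [u v]. unfold Cdiv, Cinv, Cconj, Cmult; simpl.
  replace (- v * (- v * 1))%R with (v * (v * 1))%R by ring. f_equal; unfold Rdiv; ring.
Qed.

Lemma RtoC_neq_0 (r : R) : r <> 0%R -> RtoC r <> 0.
Proof. intros Hr E. apply Hr. now injection E. Qed.

Lemma Cconj_neq_0 (z : C) : z <> 0 -> Cconj z <> 0.
Proof. intros Hz E. apply Hz. now rewrite <- (Cconj_conj z), E, Cconj_RtoC. Qed.

Lemma Cneq_0_scale (w z c : C) : w <> 0 -> c <> 0 -> z = w * c -> z <> 0.
Proof. intros Hw Hc ->. exact (Cmult_neq_0 w c Hw Hc). Qed.

Lemma Ci_neq_0 : Ci <> 0.
Proof. intro E. apply (f_equal Im) in E. simpl in E. lra. Qed.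

Lemma RtoC_Im (z : C) : RtoC (Im z) = Ci * (Cconj z - z) / 2.
Proof. destruct z as [u v]. apply C_ext; simpl; field. Qed.

(* Rewriting products of imaginary parts with this keeps [Ci] out of the goal, so
   [field] never needs [Ci * Ci = -1]. *)
Lemma RtoC_Im_mult (z w : C) :
  RtoC (Im z) * RtoC (Im w) = - ((z - Cconj z) * (w - Cconj w)) / 4.
Proof. destruct z as [u1 u2], w as [w1 w2]. apply C_ext; simpl; field. Qed.

Lemma RtoC_brJ (sigma : R) (v : vec2) :
  RtoC (brJ sigma v) = v1 v * Cconj (v1 v) + RtoC sigma * (v2 v * Cconj (v2 v)).
Proof. unfold brJ. now rewrite RtoC_plus, RtoC_mult, !Cmod2_conj. Qed.

Ltac push_RtoC :=
  unfold Rdiv; repeat rewrite ?RtoC_plus, ?RtoC_minus, ?RtoC_mult, ?RtoC_opp, ?RtoC_Rinv.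

Ltac simpl_Cconj := repeat progress rewrite ?Cconj_Cdiv, ?Cplus_conj, ?Cminus_conj,
  ?Copp_conj, ?Cmult_conj, ?Cconj_conj, ?Cconj_Ci, ?Cconj_RtoC.

Ltac simpl_Cconj_in H := repeat progress rewrite ?Cconj_Cdiv, ?Cplus_conj, ?Cminus_conj,
  ?Copp_conj, ?Cmult_conj, ?Cconj_conj, ?Cconj_Ci, ?Cconj_RtoC in H.

(* [brJ (- sigma) v] is <v|sigma_3 J|v> = |v1|^2 - sigma |v2|^2. *)
Lemma Cmod_sqr_q1_expand (sigma : R) (l1 q0 : C) (v : vec2) :
  (sigma = 1 \/ sigma = -1)%R -> brJ sigma v <> 0%R ->
  (Cmod (q0 + (Cconj l1 - l1) * Cconj (v1 v) * v2 v / RtoC (brJ sigma v)) ^ 2 =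
   Cmod q0 ^ 2
   + sigma * (Im l1 * Im l1) * (brJ sigma v ^ 2 - brJ (- sigma) v ^ 2) / brJ sigma v ^ 2
   - 4 * (Im l1 * Im (q0 * v1 v * Cconj (v2 v))) / brJ sigma v)%R.
Proof.
  intros Hsigma HB.
  pose proof (RtoC_neq_0 _ HB) as HB0. rewrite RtoC_brJ in HB0.
  apply RtoC_inj.
  push_RtoC. rewrite !Cmod2_conj, !RtoC_pow, !RtoC_brJ, !RtoC_Im_mult. push_RtoC.
  simpl_Cconj.
  destruct Hsigma as [-> | ->]; as_eq C; field;
    refine (Cneq_0_scale _ _ 1 HB0 C1_nz _); as_eq C; ring.
Qed.

Section Darboux.

Variables (a sigma : R) (rho : Z -> R -> R) (q : Z -> R -> C) (l1 : C) (y : Z -> R -> vec2).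
Hypothesis Hy : lax_solution a sigma rho q l1 y.

Lemma brJ_derive (tau : R) (n : Z) (s : R) :
  is_derive (fun t => brJ tau (y n t)) s
    (- (Im l1 / 2) * brJ (- tau) (y n s)
     + (sigma - tau) * Im (q n s * v1 (y n s) * Cconj (v2 (y n s))))%R.
Proof.
  destruct Hy as [_ Hys].
  assert (Hy1 := fun n s => proj1 (Hys n s)). assert (Hy2 := fun n s => proj2 (Hys n s)).
  clear Hys.
  match goal with |- is_derive _ _ ?d =>
    apply (is_derive_Re (fun t => RtoC (brJ tau (y n t))) s (RtoC d)) end.
  apply (is_derive_ext (fun t => v1 (y n t) * Cconj (v1 (y n t))
                                 + RtoC tau * (v2 (y n t) * Cconj (v2 (y n t))))).
  { intro t. symmetry. apply RtoC_brJ. }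
  eapply is_derive_eq; [derive_C |].
  push_RtoC. rewrite RtoC_brJ, !RtoC_Im. push_RtoC.
  unfold mulMV, Vmat; cbn [v1 v2 m11 m12 m21 m22]. simpl_Cconj.
  as_eq C. field.
Qed.

Lemma brJ_derive_sigma (n : Z) (s : R) :
  is_derive (fun t => brJ sigma (y n t)) s (- (Im l1 / 2) * brJ (- sigma) (y n s))%R.
Proof.
  eapply is_derive_eq; [apply brJ_derive |]. now rewrite Rminus_diag, Rmult_0_l, Rplus_0_r.
Qed.

Hypothesis HB : forall n s, brJ sigma (y n s) <> 0%R.
Hypothesis Ha : a <> 0%R.

Lemma rho1_eq (n : Z) (s : R) :
  rho1 a sigma rho y n s =
  (rho n s + Im l1 / a * (brJ (- sigma) (y (n + 1)%Z s) / brJ sigma (y (n + 1)%Z s)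
                          - brJ (- sigma) (y n s) / brJ sigma (y n s)))%R.
Proof.
  unfold rho1.
  assert (Hquot : (brJ sigma (y (n + 1)%Z s) / brJ sigma (y n s) <> 0)%R).
  { unfold Rdiv. apply Rmult_integral_contrapositive_currified; [apply HB |].
    apply Rinv_neq_0_compat, HB. }
  erewrite is_derive_unique by
    (apply (is_derive_ln_Rabs (fun t => brJ sigma (y (n + 1)%Z t) / brJ sigma (y n t))%R);
     [ exact (is_derive_div _ _ _ _ _ (brJ_derive_sigma (n + 1) s) (brJ_derive_sigma n s) (HB n s))
     | exact Hquot ]).
  cbv beta; as_eq R. field. repeat split; auto.
Qed.

Lemma rho1_eq_C (n : Z) (s : R) :
  Ci * RtoC a * RtoC (rho1 a sigma rho y n s) =
  Ci * RtoC a * RtoC (rho n s)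
  + (l1 - Cconj l1) / 2 *
      (RtoC (brJ (- sigma) (y (n + 1)%Z s)) / RtoC (brJ sigma (y (n + 1)%Z s))
       - RtoC (brJ (- sigma) (y n s)) / RtoC (brJ sigma (y n s))).
Proof.
  rewrite rho1_eq.
  pose proof (HB n s). pose proof (HB (n + 1)%Z s).
  push_RtoC. rewrite im_alt.
  as_eq C. field. repeat split; try apply RtoC_neq_0; auto using Ci_neq_0.
Qed.

Hypothesis Hsigma : sigma = 1%R \/ sigma = (-1)%R.

Lemma Tmat_Umat_intertwine (lam : C) (Psi0 : vec2) (n : Z) (s : R) :
  l1 <> 0 -> lam <> 0 -> lam - Cconj l1 <> 0 ->
  mulMV (Tmat sigma l1 (y (n + 1)%Z s) lam) (mulMV (Umat a sigma rho q n s lam) Psi0) =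
  mulMV (Umat a sigma (rho1 a sigma rho y) (q1 sigma l1 q y) n s lam)
        (mulMV (Tmat sigma l1 (y n s) lam) Psi0).
Proof.
  intros Hl1 Hlam Hlamc.
  pose proof (Cconj_neq_0 l1 Hl1) as Hl1c.
  pose proof (RtoC_neq_0 _ (HB n s)) as HB0.
  pose proof (RtoC_neq_0 _ (HB (n + 1)%Z s)) as HB1.
  unfold Umat at 2. rewrite rho1_eq_C.
  unfold q1, Tmat, Pmat; cbv zeta.
  rewrite (proj1 Hy n s) in HB1 |- *.
  push_RtoC. rewrite !RtoC_brJ in HB0, HB1. rewrite !RtoC_brJ. push_RtoC.
  unfold mulMV, Umat in HB1 |- *; cbn [v1 v2 m11 m12 m21 m22] in HB1 |- *.
  simpl_Cconj. simpl_Cconj_in HB1.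
  (* Written through y_n, the denominator <y_{n+1}|J|y_{n+1}> reaches [field]
     multiplied by |l1|^2. *)
  destruct Hsigma as [-> | ->]; f_equal; as_eq C; field;
    repeat split; try assumption;
    first [ refine (Cneq_0_scale _ _ 1 HB0 C1_nz _); as_eq C; ring
          | refine (Cneq_0_scale _ _ (l1 * Cconj l1) HB1 (Cmult_neq_0 _ _ Hl1 Hl1c) _);
            as_eq C; field; split; assumption ].
Qed.

Lemma Tmat_Vmat_derive (lam : C) (Psi : Z -> R -> vec2) (n : Z) (s : R) :
  lam - Cconj l1 <> 0 -> lax_solution a sigma rho q lam Psi ->
  is_derive (fun t => v1 (mulMV (Tmat sigma l1 (y n t) lam) (Psi n t))) s
    (v1 (mulMV (Vmat sigma (q1 sigma l1 q y) n s lam)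
               (mulMV (Tmat sigma l1 (y n s) lam) (Psi n s)))) /\
  is_derive (fun t => v2 (mulMV (Tmat sigma l1 (y n t) lam) (Psi n t))) s
    (v2 (mulMV (Vmat sigma (q1 sigma l1 q y) n s lam)
               (mulMV (Tmat sigma l1 (y n s) lam) (Psi n s)))).
Proof.
  intros Hlamc [_ HPsi].
  destruct Hy as [_ Hys].
  assert (Hy1 := fun n s => proj1 (Hys n s)). assert (Hy2 := fun n s => proj2 (Hys n s)).
  assert (HPsi1 := fun n s => proj1 (HPsi n s)). assert (HPsi2 := fun n s => proj2 (HPsi n s)).
  assert (HdB := brJ_derive_sigma).
  clear Hys HPsi.
  pose proof (RtoC_neq_0 _ (HB n s)) as HB0. rewrite RtoC_brJ in HB0.
  unfold mulMV, Tmat, Pmat; cbv zeta; cbn [v1 v2 m11 m12 m21 m22].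
  split; (eapply is_derive_eq; [derive_C; apply HB |]);
    push_RtoC; rewrite !RtoC_brJ, !RtoC_Im; push_RtoC;
    unfold q1, Vmat, mulMV; cbn [v1 v2 m11 m12 m21 m22]; simpl_Cconj; rewrite !RtoC_brJ;
    destruct Hsigma as [-> | ->]; as_eq C; field;
    repeat split; try assumption;
    refine (Cneq_0_scale _ _ 1 HB0 C1_nz _); as_eq C; ring.
Qed.

Lemma Derive_ln_Cmod_brJ (n : Z) (c : C) (t : R) : c <> 0 ->
  Derive (fun u => ln (Cmod (RtoC (brJ sigma (y n u)) / c))) t =
  (- (Im l1 / 2) * (brJ (- sigma) (y n t) / brJ sigma (y n t)))%R.
Proof.
  intro Hc. apply is_derive_unique. eapply is_derive_eq.
  - apply (is_derive_ln_Cmod_RtoC_div (fun u => brJ sigma (y n u)));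
      [apply brJ_derive_sigma | apply HB | exact Hc].
  - as_eq R. field. apply HB.
Qed.

Lemma q1_Cmod_sqr (n : Z) (s : R) : Cconj l1 - l1 <> 0 ->
  (Cmod (q1 sigma l1 q y n s) ^ 2 =
   Cmod (q n s) ^ 2 + 4 * sigma *
     Derive (fun t => Derive (fun u =>
        ln (Cmod (RtoC (brJ sigma (y n u)) / (Cconj l1 - l1)))) t) s)%R.
Proof.
  intro Hc.
  erewrite Derive_ext by exact (fun t => Derive_ln_Cmod_brJ n _ t Hc).
  rewrite Derive_scal.
  erewrite is_derive_unique by
    exact (is_derive_div _ _ _ _ _ (brJ_derive (- sigma) n s) (brJ_derive_sigma n s) (HB n s)).
  unfold q1. rewrite (Cmod_sqr_q1_expand sigma l1 (q n s) (y n s) Hsigma (HB n s)).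
  rewrite Ropp_involutive.
  pose proof (HB n s).
  destruct Hsigma as [-> | ->]; as_eq R; field; assumption.
Qed.

End Darboux.

Theorem proposition1 (a sigma : R) (rho : Z -> R -> R) (q : Z -> R -> C)
    (l1 : C) (y : Z -> R -> vec2) :
  (0 < a)%R ->
  (sigma = 1%R \/ sigma = (-1)%R) ->
  Im l1 <> 0%R ->
  lax_solution a sigma rho q l1 y ->
  (forall (n : Z) (s : R), brJ sigma (y n s) <> 0%R) ->
  (forall (lam : C) (Psi : Z -> R -> vec2),
      lam <> RtoC 0 -> lam <> Cconj l1 ->
      lax_solution a sigma rho q lam Psi ->
      lax_solution a sigma (rho1 a sigma rho y) (q1 sigma l1 q y) lam
        (fun n s => mulMV (Tmat sigma l1 (y n s) lam) (Psi n s)))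
  /\ (forall (n : Z) (s : R),
      (Cmod (q1 sigma l1 q y n s) ^ 2 =
       Cmod (q n s) ^ 2 + 4 * sigma *
         Derive (fun t => Derive (fun u =>
            ln (Cmod (RtoC (brJ sigma (y n u)) / (Cconj l1 - l1)))) t) s)%R).
Proof.
  intros Ha Hsigma Hl1 Hy HB.
  assert (Ha0 : a <> 0%R) by (intro E; lra).
  assert (Hl10 : l1 <> 0) by (intros ->; apply Hl1; reflexivity).
  assert (Hl1c : Cconj l1 - l1 <> 0).
  { apply Cminus_eq_contra. intro E. apply Hl1.
    apply (f_equal Im) in E. unfold Im in *. simpl in E. lra. }
  split.
  - intros lam Psi Hlam Hlamc HPsi.
    apply Cminus_eq_contra in Hlamc.
    split.
    + intros n s. rewrite (proj1 HPsi n s).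
      now apply (Tmat_Umat_intertwine a sigma rho q l1 y).
    + intros n s. now apply (Tmat_Vmat_derive a sigma rho q l1 y).
  - intros n s. now apply (q1_Cmod_sqr a sigma rho q l1 y).
Qed.
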